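(* Let $\mathcal H$ be an infinite-dimensional complex Hilbert space and let $\mathcal C_f(\mathcal H)$ be the set of closed forms in $\mathcal V_f(\mathcal H)$. Then $(\mathcal C_f(\mathcal H);\oplus_{|\mathcal C_f(\mathcal H)},o)$ is a generalized effect algebra.
   Context: Bilinear forms $t$ on $\mathcal H$ are sesquilinear maps $D(t)\times D(t)\to\mathbb C$ on a dense linear subspace $D(t)$ (linear in the first argument); $t$ is positive if $t(x,x)\ge0$ on $D(t)$, bounded if $\sup\{t(x,x)\mid x\in D(t),\|x\|=1\}<\infty$. The sum $t+s$ has domain $D(t)\cap D(s)$. $o$ is the zero form on $\mathcal H$. $\mathcal V_f(\mathcal H)$ is the set of positive bilinear forms with dense domain such that $D(t)=\mathcal H$ whenever $t$ is bounded; $t\oplus s$ is defined iff $t$ or $s$ is bounded or $D(t)=D(s)$, and then $t\oplus s=t+s$. A positive form $t$ is closed if $D(t)$ is a Hilbert space under $(x,y)_t=t(x,y)+(1+m_t)(x,y)$ with $m_t=\inf\{t(x,x)\mid x\in D(t),\|x\|=1\}$. For $Q\subseteq\mathcal V_f(\mathcal H)$, $x\oplus_{|Q}y$ is defined iff $x\oplus y$ is defined and lies in $Q$, and then equals $x\oplus y$. A generalized effect algebra is a structure $(E;\oplus,0)$ with a partial operation that is commutative and associative (when one side is defined), has $x\oplus0=x$, is cancellative, and satisfies $x\oplus y=0\Rightarrow x=y=0$. *)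

From HB Require Import structures.
From mathcomp Require Import all_boot all_order all_algebra.
From mathcomp Require Import complex.
From mathcomp Require Import boolp classical_sets reals.

Set Implicit Arguments.
Unset Strict Implicit.
Unset Printing Implicit Defensive.

Import Order.TTheory GRing.Theory Num.Theory.
Local Open Scope ring_scope.
Local Open Scope classical_set_scope.
Local Open Scope complex_scope.
Local Open Scope ring_scope.

Section Hilbert.
Context {R : realType} {V : lmodType R[i]}.
Variable ip : V -> V -> R[i].

Definition is_inner_product : Prop :=
  [/\ (forall (a : R[i]) (x y z : V), ip (a *: x + y) z = a * ip x z + ip y z),
      (forall x y : V, ip y x = (ip x y)^*),
      (forall x : V, 0 <= ip x x) &
      (forall x : V, ip x x = 0 -> x = 0)].

Definition hnorm (x : V) : R := Num.sqrt (complex.Re (ip x x)).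

Definition hcauchy (u : nat -> V) : Prop :=
  forall e : R, 0 < e -> exists N : nat, forall n m : nat,
    (N <= n)%N -> (N <= m)%N -> hnorm (u n - u m) < e.

Definition hconverges_to (u : nat -> V) (x : V) : Prop :=
  forall e : R, 0 < e -> exists N : nat, forall n : nat,
    (N <= n)%N -> hnorm (u n - x) < e.

Definition hcomplete : Prop :=
  forall u : nat -> V, hcauchy u -> exists x : V, hconverges_to u x.

Definition infinite_dimensional : Prop :=
  forall n : nat, exists v : 'I_n -> V,
    forall c : 'I_n -> R[i], \sum_(j < n) c j *: v j = 0 -> forall j, c j = 0.

(* A form is represented by its domain D(t) and a function V -> V -> C
   whose values outside D(t) x D(t) are normalized to 0 (so that two forms
   are equal iff they have the same domain and agree on it). *)
Definition form := (set V * (V -> V -> R[i]))%type.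

Definition fdom (t : form) : set V := t.1.
Definition fval (t : form) : V -> V -> R[i] := t.2.

Definition linear_subspace (D : set V) : Prop :=
  D 0 /\ forall (a : R[i]) x y, D x -> D y -> D (a *: x + y).

Definition dense (D : set V) : Prop :=
  forall (x : V) (e : R), 0 < e -> exists2 y, D y & hnorm (x - y) < e.

Definition is_form (t : form) : Prop :=
  [/\ linear_subspace (fdom t), dense (fdom t),
      (forall (a : R[i]) x y z, fdom t x -> fdom t y -> fdom t z ->
         fval t (a *: x + y) z = a * fval t x z + fval t y z),
      (forall (a : R[i]) x y z, fdom t x -> fdom t y -> fdom t z ->
         fval t x (a *: y + z) = a^* * fval t x y + fval t x z) &
      (forall x y, ~ (fdom t x /\ fdom t y) -> fval t x y = 0)].

Definition form_positive (t : form) : Prop :=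
  forall x, fdom t x -> 0 <= fval t x x.

Definition form_bounded (t : form) : Prop :=
  exists M : R, forall x, fdom t x -> hnorm x = 1 -> fval t x x <= M%:C.

Definition zero_form : form := (setT, fun _ _ => 0).

Definition Vf (t : form) : Prop :=
  [/\ is_form t, form_positive t & (form_bounded t -> fdom t = setT)].

Definition form_m (t : form) : R :=
  inf [set complex.Re (fval t x x) | x in [set x | fdom t x /\ hnorm x = 1]].

(* the norm of (x,y)_t = t(x,y) + (1 + m_t)(x,y) on D(t) *)
Definition tnorm (t : form) (x : V) : R :=
  Num.sqrt (complex.Re (fval t x x + (1 + form_m t)%:C * ip x x)).

Definition form_closed (t : form) : Prop :=
  forall u : nat -> V, (forall n, fdom t (u n)) ->
    (forall e : R, 0 < e -> exists N : nat, forall n m : nat,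
        (N <= n)%N -> (N <= m)%N -> tnorm t (u n - u m) < e) ->
    exists2 x, fdom t x &
      (forall e : R, 0 < e -> exists N : nat, forall n : nat,
         (N <= n)%N -> tnorm t (u n - x) < e).

Definition Cf (t : form) : Prop := Vf t /\ form_closed t.

Definition form_sum_is (t s w : form) : Prop :=
  fdom w = fdom t `&` fdom s /\
  forall x y, fval w x y =
    if `[< fdom w x /\ fdom w y >] then fval t x y + fval s x y else 0.

Definition oplus_is (t s w : form) : Prop :=
  (form_bounded t \/ form_bounded s \/ fdom t = fdom s) /\ form_sum_is t s w.

End Hilbert.

Definition restrict_op {E : Type} (Q : E -> Prop) (op : E -> E -> E -> Prop)
  : E -> E -> E -> Prop := fun x y w => op x y w /\ Q w.

(* Generalized effect algebra with carrier Q (a subset of E), partial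
   operation op given as a relation (op x y w  <->  x (+) y is defined and
   equals w) and zero z. *)
Definition generalized_effect_algebra {E : Type} (Q : E -> Prop)
  (op : E -> E -> E -> Prop) (z : E) : Prop :=
  Q z /\
  [/\
      (forall x y w w', Q x -> Q y -> op x y w -> op x y w' -> w = w'),
      (forall x y w, Q x -> Q y -> op x y w -> Q w) &
      (forall x y w, Q x -> Q y -> op x y w -> op y x w)] /\
  [/\
      (forall x y u, Q x -> Q y -> Q u ->
         (forall xy v, op x y xy -> op xy u v ->
            exists2 yu, op y u yu & op x yu v) /\
         (forall yu v, op y u yu -> op x yu v ->
            exists2 xy, op x y xy & op xy u v)),
      (forall x, Q x -> op x z x),
      (forall x y u w, Q x -> Q y -> Q u -> op x y w -> op x u w -> y = u) &
      (forall x y, Q x -> Q y -> op x y z -> x = z /\ y = z)].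

From Pilot Require Import Defs.
From HB Require Import structures.
From mathcomp Require Import all_boot all_order all_algebra.
From mathcomp Require Import complex.
From mathcomp Require Import boolp classical_sets reals.
From mathcomp Require Import ring lra.

(* The sum of two compatible forms of V_f(H) is again in V_f(H), since the
   intersection of the domains is one of the two domains, hence dense.  It is
   closed: its form norm dominates the form norms of both summands, so a Cauchy
   sequence for t + s converges for t and for s, and the two limits coincide
   because every form norm dominates the Hilbert norm.  The delicate axiom is
   cancellation: from x (+) y = x (+) u with y, u bounded and x unbounded we
   only learn that y and u agree on the dense domain of x.  Bounded forms are
   continuous, as q(a) <= (1+k) q(p) + (1+1/k) K ||a - p||^2 for every k > 0,
   so the quadratic forms of y and u agree everywhere and polarization gives
   y = u.  Completeness of H is needed only to make the zero form closed. *)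

Set Implicit Arguments.
Unset Strict Implicit.
Unset Printing Implicit Defensive.
Import Order.TTheory GRing.Theory Num.Theory.
Local Open Scope classical_set_scope.
Local Open Scope complex_scope.
Local Open Scope ring_scope.

Section ComplexFacts.
Variable R : realType.
Implicit Types z : R[i].

Lemma ReD z z' : complex.Re (z + z') = complex.Re z + complex.Re z'.
Proof. exact: raddfD. Qed.

Lemma ReN z : complex.Re (- z) = - complex.Re z.
Proof. exact: raddfN. Qed.

Lemma Re_realM (t : R) z : complex.Re (t%:C * z) = t * complex.Re z.
Proof. by case: z => a b /=; rewrite mul0r subr0. Qed.

Lemma conj_real (t : R) : (t%:C)^* = t%:C.
Proof. by apply: conj_Creal; rewrite complex_real. Qed.

Lemma ge0_complex_real z : 0 <= z -> z = (complex.Re z)%:C.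
Proof. by case: z => a b; rewrite lecE /= => /andP[/eqP -> _]. Qed.

Lemma Re_ge0 z : 0 <= z -> 0 <= complex.Re z.
Proof. by rewrite lecE => /andP[]. Qed.

Lemma ler_Re z z' : z <= z' -> complex.Re z <= complex.Re z'.
Proof. by rewrite lecE => /andP[]. Qed.

End ComplexFacts.

Section RealLimits.
Variable R : realFieldType.

Lemma ler_of_approx (x y C : R) : 0 <= C ->
  (forall d, 0 < d -> exists n, [/\ 0 <= n, n < d & x <= y + C * n]) -> x <= y.
Proof.
move=> C0 approx; apply/ler_addgt0Pr => e e0.
have d0 : 0 < e / (C + 1) by apply: divr_gt0 => //; lra.
have [n [n0 nd xle]] := approx _ d0.
apply: le_trans xle _; rewrite lerD2l.
have Cd : C * (e / (C + 1)) <= e by rewrite mulrA ler_pdivrMr; nra.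
by apply: le_trans Cd; apply: ler_wpM2l => //; apply: ltW.
Qed.

Lemma ler_of_forall_scale (x y : R) : 0 <= y ->
  (forall k, 0 < k -> x <= (1 + k) ^+ 2 * y) -> x <= y.
Proof.
move=> y0 scale; apply/ler_addgt0Pr => e e0.
have D0 : 0 < 3 * y + 3 + e by lra.
set k := e / (3 * y + 3 + e).
have k0 : 0 < k by apply: divr_gt0.
have k1 : k <= 1 by rewrite ler_pdivrMr //; lra.
have kD : k * (3 * y + 3 + e) = e by rewrite /k mulfVK // gt_eqF.
apply: le_trans (scale k k0) _.
have : k * k * y <= k * y by apply: ler_wpM2r => //; rewrite ger_pMr.
have := mulr_ge0 (ltW k0) y0; nra.
Qed.

Definition vanishing (g : nat -> R) :=
  forall e, 0 < e -> exists N : nat, forall n, (N <= n)%N -> g n < e.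

Definition vanishing2 (g : nat -> nat -> R) :=
  forall e, 0 < e -> exists N : nat, forall n m,
    (N <= n)%N -> (N <= m)%N -> g n m < e.

Lemma vanishing_le (g h : nat -> R) (K : R) : 0 < K ->
  (forall n, g n <= K * h n) -> vanishing h -> vanishing g.
Proof.
move=> K0 gh vh e e0; have [N hN] := vh (e / K) (divr_gt0 e0 K0).
exists N => n Nn; apply: le_lt_trans (gh n) _.
by rewrite -ltr_pdivlMl // mulrC; apply: hN.
Qed.

Lemma vanishing2_le (g h : nat -> nat -> R) (K : R) : 0 < K ->
  (forall n m, g n m <= K * h n m) -> vanishing2 h -> vanishing2 g.
Proof.
move=> K0 gh vh e e0; have [N hN] := vh (e / K) (divr_gt0 e0 K0).
exists N => n m Nn Nm; apply: le_lt_trans (gh n m) _.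
by rewrite -ltr_pdivlMl // mulrC; apply: hN.
Qed.

Lemma vanishingD (g h : nat -> R) :
  vanishing g -> vanishing h -> vanishing (fun n => g n + h n).
Proof.
move=> vg vh e e0; have e20 : 0 < e / 2 by apply: divr_gt0 => //; lra.
have [N1 h1] := vg _ e20; have [N2 h2] := vh _ e20.
exists (maxn N1 N2) => n; rewrite geq_max => /andP[n1 n2].
by have := h1 n n1; have := h2 n n2; lra.
Qed.

End RealLimits.

Section SqrtLimits.
Variable R : rcfType.

Lemma sqrt_lt_sqr (q e : R) : 0 <= q -> 0 < e -> (Num.sqrt q < e) = (q < e ^+ 2).
Proof.
move=> q0 e0; rewrite -[X in _ < X](ger0_norm (ltW e0)) -sqrtr_sqr ltr_sqrt //.
exact: exprn_gt0.
Qed.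

Lemma vanishing_sqrt (g : nat -> R) : (forall n, 0 <= g n) ->
  vanishing (fun n => Num.sqrt (g n)) <-> vanishing g.
Proof.
move=> g0; split => vg e e0.
- have [N hN] := vg (Num.sqrt e) ltac:(by rewrite sqrtr_gt0).
  by exists N => n Nn; rewrite -ltr_sqrt // hN.
- have [N hN] := vg (e ^+ 2) (exprn_gt0 _ e0).
  by exists N => n Nn; rewrite sqrt_lt_sqr // hN.
Qed.

Lemma vanishing2_sqrt (g : nat -> nat -> R) : (forall n m, 0 <= g n m) ->
  vanishing2 (fun n m => Num.sqrt (g n m)) <-> vanishing2 g.
Proof.
move=> g0; split => vg e e0.
- have [N hN] := vg (Num.sqrt e) ltac:(by rewrite sqrtr_gt0).
  by exists N => n m Nn Nm; rewrite -ltr_sqrt // hN.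
- have [N hN] := vg (e ^+ 2) (exprn_gt0 _ e0).
  by exists N => n m Nn Nm; rewrite sqrt_lt_sqr // hN.
Qed.

End SqrtLimits.

Lemma setI_eqT (T : Type) (A B : set T) : A `&` B = setT -> A = setT /\ B = setT.
Proof.
move=> AB; split; apply/seteqP; split => // a _.
  by have [] : (A `&` B) a by rewrite AB.
by have [] : (A `&` B) a by rewrite AB.
Qed.

Section Subspace.
Variables (R : realType) (V : lmodType R[i]) (D : set V).
Hypothesis subD : linear_subspace D.

Lemma subspace0 : D 0. Proof. by case: subD. Qed.

Lemma subspaceZD a x y : D x -> D y -> D (a *: x + y).
Proof. by case: subD => _; apply. Qed.

Lemma subspaceD x y : D x -> D y -> D (x + y).
Proof. by move=> Dx Dy; have := subspaceZD 1 Dx Dy; rewrite scale1r. Qed.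

Lemma subspaceZ a x : D x -> D (a *: x).
Proof. by move=> Dx; have := subspaceZD a Dx subspace0; rewrite addr0. Qed.

Lemma subspaceN x : D x -> D (- x).
Proof. by move=> Dx; rewrite -scaleN1r; apply: subspaceZ. Qed.

Lemma subspaceB x y : D x -> D y -> D (x - y).
Proof. by move=> Dx Dy; apply/subspaceD/subspaceN. Qed.

Lemma linear_subspaceI (D' : set V) :
  linear_subspace D' -> linear_subspace (D `&` D').
Proof.
move=> subD'; split; first by split; [apply: subspace0 | case: subD'].
by move=> a x y [Dx D'x] [Dy D'y]; split; [apply: subspaceZD | case: subD' => _; apply].
Qed.

End Subspace.

Section Sesquilinear.
Variables (R : realType) (V : lmodType R[i]).

Definition sesq (D : set V) (f : V -> V -> R[i]) :=
 [/\ linear_subspace D,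
   (forall a x y z, D x -> D y -> D z -> f (a *: x + y) z = a * f x z + f y z) &
   (forall a x y z, D x -> D y -> D z -> f x (a *: y + z) = a^* * f x y + f x z)].

Variables (D : set V) (f : V -> V -> R[i]).
Hypothesis sesqf : sesq D f.

Let subD : linear_subspace D. Proof. by case: sesqf. Qed.
Let linl a x y z : D x -> D y -> D z -> f (a *: x + y) z = a * f x z + f y z.
Proof. by case: sesqf => _ + _; apply. Qed.
Let linr a x y z : D x -> D y -> D z -> f x (a *: y + z) = a^* * f x y + f x z.
Proof. by case: sesqf => _ _; apply. Qed.

Lemma sesq0l z : D z -> f 0 z = 0.
Proof.
move=> Dz; have := linl 1 (subspace0 subD) (subspace0 subD) Dz.
rewrite scaler0 addr0 mul1r => e.
by apply: (@addIr _ (f 0 z)); rewrite add0r -e.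
Qed.

Lemma sesq0r z : D z -> f z 0 = 0.
Proof.
move=> Dz; have := linr 1 Dz (subspace0 subD) (subspace0 subD).
rewrite scaler0 addr0 rmorph1 mul1r => e.
by apply: (@addIr _ (f z 0)); rewrite add0r -e.
Qed.

Lemma sesqDl x y z : D x -> D y -> D z -> f (x + y) z = f x z + f y z.
Proof. by move=> Dx Dy Dz; have := linl 1 Dx Dy Dz; rewrite scale1r mul1r. Qed.

Lemma sesqDr x y z : D x -> D y -> D z -> f x (y + z) = f x y + f x z.
Proof. by move=> Dx Dy Dz; have := linr 1 Dx Dy Dz; rewrite scale1r rmorph1 mul1r. Qed.

Lemma sesqZl a x z : D x -> D z -> f (a *: x) z = a * f x z.
Proof.
by move=> Dx Dz; have := linl a Dx (subspace0 subD) Dz; rewrite addr0 sesq0l // addr0.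
Qed.

Lemma sesqZr a x z : D x -> D z -> f x (a *: z) = a^* * f x z.
Proof.
by move=> Dx Dz; have := linr a Dx Dz (subspace0 subD); rewrite addr0 sesq0r // addr0.
Qed.

Lemma sesqNl x z : D x -> D z -> f (- x) z = - f x z.
Proof. by move=> Dx Dz; rewrite -scaleN1r sesqZl // mulN1r. Qed.

Lemma sesqNr x z : D x -> D z -> f x (- z) = - f x z.
Proof. by move=> Dx Dz; rewrite -scaleN1r sesqZr // rmorphN1 mulN1r. Qed.

Lemma sesqBl x y z : D x -> D y -> D z -> f (x - y) z = f x z - f y z.
Proof. by move=> Dx Dy Dz; rewrite sesqDl ?sesqNl //; apply: subspaceN. Qed.

Lemma sesqBr x y z : D x -> D y -> D z -> f x (y - z) = f x y - f x z.
Proof. by move=> Dx Dy Dz; rewrite sesqDr ?sesqNr //; apply: subspaceN. Qed.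

Lemma sesq_diagD x y : D x -> D y ->
  f (x + y) (x + y) = f x x + f x y + f y x + f y y.
Proof.
by move=> Dx Dy; rewrite sesqDl ?sesqDr ?addrA //; apply: subspaceD.
Qed.

Lemma sesq_diagB x y : D x -> D y ->
  f (x - y) (x - y) = f x x - f x y - f y x + f y y.
Proof.
move=> Dx Dy; rewrite sesqBl ?sesqBr //; last exact: subspaceB.
by rewrite opprB !addrA; ring.
Qed.

Lemma sesq_diagZ (t : R) x : D x -> f (t%:C *: x) (t%:C *: x) = t%:C * t%:C * f x x.
Proof.
move=> Dx; rewrite sesqZl ?sesqZr ?mulrA //; last exact: subspaceZ.
by rewrite conj_real.
Qed.

End Sesquilinear.

Lemma sesq_eq_of_diag (R : realType) (V : lmodType R[i]) (f g : V -> V -> R[i]) :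
  sesq setT f -> sesq setT g -> (forall a, f a a = g a a) -> f =2 g.
Proof.
move=> sf sg fg a b.
have sym : f a b + f b a = g a b + g b a.
  have := fg (a + b); rewrite (sesq_diagD sf) // (sesq_diagD sg) // !fg.
  by move/addIr; rewrite -!addrA => /addrI.
have asym : - 'i * f a b + 'i * f b a = - 'i * g a b + 'i * g b a.
  have := fg (a + 'i *: b); rewrite (sesq_diagD sf) // (sesq_diagD sg) // !fg.
  rewrite !(sesqZl sf, sesqZr sf, sesqZl sg, sesqZr sg) // conjCi.
  by move/addIr; rewrite -!addrA => /addrI.
have polar (z z' : R[i]) : 2 * z = (z + z') + 'i * (- 'i * z + 'i * z').
  by rewrite mulrDr !mulrA mulrN -expr2 sqrCi; ring.
apply: (@mulfI _ 2); first by rewrite pnatr_eq0.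
by rewrite (polar _ (f b a)) (polar _ (g b a)) sym asym.
Qed.

Lemma sesq_diagD_le (R : realType) (V : lmodType R[i]) (f : V -> V -> R[i]) (k : R)
  (p q : V) : sesq setT f ->
  (forall v, 0 <= f v v) -> 0 < k ->
  complex.Re (f (p + q) (p + q)) <=
    (1 + k) * complex.Re (f p p) + (1 + k^-1) * complex.Re (f q q).
Proof.
move=> sf f0 k0.
set fp := complex.Re (f p p); set fq := complex.Re (f q q).
set cross := complex.Re (f p q) + complex.Re (f q p).
have pq : complex.Re (f (p + q) (p + q)) = fp + cross + fq.
  by rewrite (sesq_diagD sf) // !ReD /cross addrA.
(* 0 <= f(k p - q, k p - q) bounds the cross term *)
have kpq : 0 <= k * k * fp - k * cross + fq.
  have := Re_ge0 (f0 (k%:C *: p - q)).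
  rewrite (sesq_diagB sf) // (sesq_diagZ sf) // (sesqZl sf) // (sesqZr sf) // conj_real.
  by rewrite !(ReD, ReN) -mulrA !Re_realM /cross; lra.
have : k * cross <= k * (k * fp + k^-1 * fq).
  by rewrite [X in _ <= X]mulrDr !mulrA mulfV ?gt_eqF // mul1r; lra.
by rewrite ler_pM2l // pq; lra.
Qed.

Section Forms.
Variables (R : realType) (V : lmodType R[i]) (ip : V -> V -> R[i]).
Hypothesis ipP : is_inner_product ip.
Implicit Types (t s w x y u xy yu : @Defs.form R V) (a b p v : V).

Lemma ip_sesq : sesq setT ip.
Proof.
case: ipP => linl conj _ _; split => // a x y z _ _ _.
by rewrite conj linl rmorphD rmorphM [ip x y]conj [ip x z]conj.
Qed.

Definition sqnorm v := complex.Re (ip v v).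

Lemma sqnorm_ge0 v : 0 <= sqnorm v.
Proof. by case: ipP => _ _ ip0 _; apply: Re_ge0. Qed.

Lemma ip_diag v : ip v v = (sqnorm v)%:C.
Proof. by case: ipP => _ _ ip0 _; apply: ge0_complex_real. Qed.

Lemma sqnorm_eq0 v : sqnorm v = 0 -> v = 0.
Proof. by case: ipP => _ _ _ ip0 v0; apply: ip0; rewrite ip_diag v0. Qed.

Lemma sqnormN v : sqnorm (- v) = sqnorm v.
Proof. by rewrite /sqnorm (sesqNl ip_sesq) // (sesqNr ip_sesq) // opprK. Qed.

Lemma sqnormB a b : sqnorm (a - b) = sqnorm (b - a).
Proof. by rewrite -sqnormN opprB. Qed.

Lemma sqnormD_le a b : sqnorm (a + b) <= 2 * sqnorm a + 2 * sqnorm b.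
Proof.
have parallelogram : sqnorm (a + b) + sqnorm (a - b) = 2 * sqnorm a + 2 * sqnorm b.
  rewrite /sqnorm (sesq_diagD ip_sesq) // (sesq_diagB ip_sesq) // !(ReD, ReN).
  lra.
by have := sqnorm_ge0 (a - b); lra.
Qed.

Lemma sqnorm_limit_unique a b (z : nat -> V) :
  vanishing (fun n => sqnorm (z n - a)) -> vanishing (fun n => sqnorm (z n - b)) ->
  a = b.
Proof.
move=> za zb; apply/subr0_eq/sqnorm_eq0/le_anti; rewrite sqnorm_ge0 andbT.
apply/ler_addgt0Pr => e e0; rewrite add0r.
have e40 : 0 < e / 4 by apply: divr_gt0 => //; lra.
have [N1 h1] := za _ e40; have [N2 h2] := zb _ e40.
have := h1 _ (leq_maxl N1 N2); have := h2 _ (leq_maxr N1 N2); set N := maxn N1 N2.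
have -> : a - b = (a - z N) + (z N - b) by rewrite addrA subrK.
by have := sqnormD_le (a - z N) (z N - b); rewrite sqnormB; lra.
Qed.

Lemma form_sesq t : is_form ip t -> sesq (fdom t) (fval t).
Proof. by case. Qed.

Lemma fval_outside t a b : is_form ip t -> ~ (fdom t a /\ fdom t b) -> fval t a b = 0.
Proof. by case=> _ _ _ _; apply. Qed.

Lemma form_ext t s : is_form ip t -> is_form ip s -> fdom t = fdom s ->
  (forall a b, fdom t a -> fdom t b -> fval t a b = fval s a b) -> t = s.
Proof.
move=> Ft Fs ts tsD.
have fts : fval t = fval s.
  apply/funext => a; apply/funext => b.
  have [[Da Db]|Dab] := pselect (fdom t a /\ fdom t b); first exact: tsD.
  by rewrite !fval_outside // -ts.
by move: ts fts; case: t {Ft tsD} => ? ?; case: s {Fs} => ? ? /= -> ->.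
Qed.

Definition positive_form t := is_form ip t /\ form_positive t.

Lemma Vf_positive t : Vf ip t -> positive_form t.
Proof. by case. Qed.

Lemma Vf_bounded_dom t : Vf ip t -> form_bounded ip t -> fdom t = setT.
Proof. by case. Qed.

Lemma Vf_bounded_sesq t : Vf ip t -> form_bounded ip t -> sesq setT (fval t).
Proof. by move=> Vt bt; rewrite -(Vf_bounded_dom Vt bt); case: Vt => -[]. Qed.

Definition quad t v := complex.Re (fval t v v).

Definition tsqnorm t v := complex.Re (fval t v v + (1 + form_m ip t)%:C * ip v v).

Lemma tsqnormE t v : tsqnorm t v = quad t v + (1 + form_m ip t) * sqnorm v.
Proof. by rewrite /tsqnorm ReD Re_realM. Qed.

Section PositiveForm.
Variable t : @Defs.form R V.
Hypothesis Pt : positive_form t.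

Lemma fval_diag_ge0 v : 0 <= fval t v v.
Proof.
have [Ft post] := Pt; have [Dv|Dv] := pselect (fdom t v); first exact: post.
by rewrite fval_outside //; case.
Qed.

Lemma quad_ge0 v : 0 <= quad t v.
Proof. exact/Re_ge0/fval_diag_ge0. Qed.

Lemma fval_diag v : fval t v v = (quad t v)%:C.
Proof. exact/ge0_complex_real/fval_diag_ge0. Qed.

Lemma form_m_ge0 : 0 <= form_m ip t.
Proof.
rewrite /form_m; set S := [set _ | _ in _].
have [[r Sr]|S0] := pselect (S !=set0).
  by apply: lb_le_inf; [exists r | move=> _ [v _ <-]; apply: quad_ge0].
suff -> : S = set0 by rewrite inf0.
by apply/seteqP; split => // r Sr; apply: S0; exists r.
Qed.

Lemma sqnorm_le_tsqnorm v : sqnorm v <= tsqnorm t v.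
Proof.
rewrite tsqnormE; have := quad_ge0 v; have := sqnorm_ge0 v.
have := mulr_ge0 form_m_ge0 (sqnorm_ge0 v); lra.
Qed.

Lemma tsqnorm_ge0 v : 0 <= tsqnorm t v.
Proof. exact: le_trans (sqnorm_ge0 v) (sqnorm_le_tsqnorm v). Qed.

End PositiveForm.

Definition closed_sq t := forall z : nat -> V, (forall n, fdom t (z n)) ->
  vanishing2 (fun n m => tsqnorm t (z n - z m)) ->
  exists2 a, fdom t a & vanishing (fun n => tsqnorm t (z n - a)).

Lemma form_closedE t : positive_form t -> form_closed ip t <-> closed_sq t.
Proof.
move=> Pt.
have cauchyE (z : nat -> V) :=
  vanishing2_sqrt (fun n m => tsqnorm_ge0 Pt (z n - z m)).
have limE (z : nat -> V) a := vanishing_sqrt (fun n => tsqnorm_ge0 Pt (z n - a)).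
split => closedt z Dz /cauchyE Cz.
- by have [a Da /limE za] := closedt z Dz Cz; exists a.
- by have [a Da /limE za] := closedt z Dz Cz; exists a.
Qed.

Lemma form_sum_dom t s w : form_sum_is t s w -> fdom w = fdom t `&` fdom s.
Proof. by case. Qed.

Lemma form_sum_val t s w a b : form_sum_is t s w -> fdom w a -> fdom w b ->
  fval w a b = fval t a b + fval s a b.
Proof. by case=> _ -> wa wb; rewrite asboolT. Qed.

Lemma form_sumC t s w : form_sum_is t s w -> form_sum_is s t w.
Proof.
by case=> dom val; split => [|a b]; [rewrite dom setIC | rewrite val addrC].
Qed.

Lemma form_sum_uniq t s w w' : form_sum_is t s w -> form_sum_is t s w' -> w = w'.
Proof.
case: w w' => Dw fw [Dw' fw'] [/= -> val] [/= -> val'].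
by congr pair; apply/funext => a; apply/funext => b; rewrite val val'.
Qed.

Lemma form_sumA x y u xy yu xyu : form_sum_is x y xy -> form_sum_is xy u xyu ->
  form_sum_is y u yu -> form_sum_is x yu xyu.
Proof.
move=> sxy sxyu syu; split.
  by rewrite (form_sum_dom sxyu) (form_sum_dom sxy) (form_sum_dom syu) setIA.
move=> a b; case: sxyu => domxyu ->.
have [[xyua xyub]|nxyu] := pselect (fdom xyu a /\ fdom xyu b); last by rewrite !asboolF.
rewrite !asboolT //.
have xyudom c : fdom xyu c -> [/\ fdom xy c, fdom yu c & fdom u c].
  by rewrite domxyu (form_sum_dom sxy) (form_sum_dom syu) => -[[? ?] ?].
have [xya yua _] := xyudom a xyua; have [xyb yub _] := xyudom b xyub.
by rewrite (form_sum_val sxy) // (form_sum_val syu) // addrA.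
Qed.

Definition form_add t s : @Defs.form R V :=
  (fdom t `&` fdom s, fun a b =>
     if `[< (fdom t `&` fdom s) a /\ (fdom t `&` fdom s) b >]
     then fval t a b + fval s a b else 0).

Lemma form_addP t s : form_sum_is t s (form_add t s).
Proof. by []. Qed.

Definition compatible t s :=
  form_bounded ip t \/ form_bounded ip s \/ fdom t = fdom s.

Lemma compatible_domI t s : Vf ip t -> Vf ip s -> compatible t s ->
  fdom t `&` fdom s = fdom t \/ fdom t `&` fdom s = fdom s.
Proof.
case=> _ _ bt [_ _ bs] [/bt ->|[/bs ->|->]].
- by right; rewrite setTI.
- by left; rewrite setIT.
- by left; rewrite setIid.
Qed.

Lemma form_bounded_summand t s w : positive_form s -> form_sum_is t s w ->
  fdom t `<=` fdom w -> form_bounded ip w -> form_bounded ip t.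
Proof.
move=> Ps tsw tw [M wM]; exists M => v tv v1; apply: le_trans (wM v (tw _ tv) v1).
by rewrite (form_sum_val tsw) ?lerDl; [apply: fval_diag_ge0 | apply: tw..].
Qed.

Lemma form_sum_bounded t s w : positive_form t -> positive_form s ->
  form_sum_is t s w -> form_bounded ip t -> form_bounded ip s -> form_bounded ip w.
Proof.
move=> Pt Ps tsw [Mt tM] [Ms sM]; exists (Mt + Ms) => v wv v1.
have [tv sv] : fdom t v /\ fdom s v by move: wv; rewrite (form_sum_dom tsw).
rewrite (form_sum_val tsw) // (ge0_complex_real (fval_diag_ge0 Pt v)).
rewrite (ge0_complex_real (fval_diag_ge0 Ps v)) -rmorphD lecR.
by apply: lerD; [move/ler_Re: (tM v tv v1) | move/ler_Re: (sM v sv v1)].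
Qed.

Lemma form_sum_Vf t s w : Vf ip t -> Vf ip s -> compatible t s ->
  form_sum_is t s w -> Vf ip w.
Proof.
move=> Vt Vs ts tsw; have Pt := Vf_positive Vt; have Ps := Vf_positive Vs.
have [[subt _ _ _ _] _] := Pt; have [[subs _ _ _ _] _] := Ps.
have St := form_sesq Pt.1; have Ss := form_sesq Ps.1.
have domw := form_sum_dom tsw.
have inw c : fdom w c -> fdom t c /\ fdom s c by rewrite domw.
have subw : linear_subspace (fdom w) by rewrite domw; apply: linear_subspaceI.
have Fw : is_form ip w.
  split => //.
  - rewrite domw; case: Pt => -[_ dt _ _ _] _; case: Ps => -[_ ds _ _ _] _.
    by case: (compatible_domI Vt Vs ts) => ->.
  - move=> a x y z wx wy wz; have := subspaceZD subw a wx wy.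
    move=> wZD; rewrite !(form_sum_val tsw) //.
    have [[tx sx] [ty sy] [tz sz]] := And3 (inw x wx) (inw y wy) (inw z wz).
    by case: St => _ -> // _; case: Ss => _ -> // _; ring.
  - move=> a x y z wx wy wz; have := subspaceZD subw a wy wz.
    move=> wZD; rewrite !(form_sum_val tsw) //.
    have [[tx sx] [ty sy] [tz sz]] := And3 (inw x wx) (inw y wy) (inw z wz).
    by case: St => _ _ -> //; case: Ss => _ _ -> //; ring.
  - by case: tsw => _ val x y xy; rewrite val asboolF.
have Pw : form_positive w.
  move=> v wv; rewrite (form_sum_val tsw) //.
  by apply: addr_ge0; apply: fval_diag_ge0.
split => // bw; rewrite domw.
case: (compatible_domI Vt Vs ts) => dom_ts; rewrite dom_ts.
- apply/(Vf_bounded_dom Vt)/(form_bounded_summand Ps tsw) => //.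
  by rewrite domw dom_ts.
- apply/(Vf_bounded_dom Vs)/(form_bounded_summand Pt (form_sumC tsw)) => //.
  by rewrite domw dom_ts.
Qed.

Lemma quad_sum t s w v : form_sum_is t s w -> fdom w v ->
  quad w v = quad t v + quad s v.
Proof. by move=> tsw wv; rewrite /quad (form_sum_val tsw) // ReD. Qed.

Lemma tsqnorm_summand_le t s w v : positive_form t -> positive_form s ->
  positive_form w -> form_sum_is t s w -> fdom w v ->
  tsqnorm t v <= (1 + form_m ip t) * tsqnorm w v.
Proof.
move=> Pt Ps Pw tsw wv; rewrite !tsqnormE (quad_sum tsw wv).
have mt := form_m_ge0 Pt; have mw := form_m_ge0 Pw; have n0 := sqnorm_ge0 v.
have qt := quad_ge0 Pt v; have qs := quad_ge0 Ps v.
have := mulr_ge0 mt qt; have := mulr_ge0 mt qs.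
have := mulr_ge0 mt (mulr_ge0 mw n0); have := mulr_ge0 mw n0.
nra.
Qed.

Lemma tsqnorm_sum_le t s w v : positive_form t -> positive_form s ->
  positive_form w -> form_sum_is t s w -> fdom w v ->
  tsqnorm w v <= (1 + form_m ip w) * (tsqnorm t v + tsqnorm s v).
Proof.
move=> Pt Ps Pw tsw wv; rewrite !tsqnormE (quad_sum tsw wv).
have mt := form_m_ge0 Pt; have ms := form_m_ge0 Ps; have mw := form_m_ge0 Pw.
have n0 := sqnorm_ge0 v; have qt := quad_ge0 Pt v; have qs := quad_ge0 Ps v.
have := mulr_ge0 mw qt; have := mulr_ge0 mw qs; have := mulr_ge0 mw n0.
have := mulr_ge0 mw (mulr_ge0 mt n0); have := mulr_ge0 mw (mulr_ge0 ms n0).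
have := mulr_ge0 mt n0; have := mulr_ge0 ms n0.
nra.
Qed.

Lemma form_sum_closed t s w : Cf ip t -> Cf ip s -> compatible t s ->
  form_sum_is t s w -> form_closed ip w.
Proof.
move=> [Vt ct] [Vs cs] ts tsw.
have Pt := Vf_positive Vt; have Ps := Vf_positive Vs.
have Pw := Vf_positive (form_sum_Vf Vt Vs ts tsw).
have subw : linear_subspace (fdom w) by case: Pw => -[].
have domw := form_sum_dom tsw.
apply/(form_closedE Pw) => z wz Cz.
have summand_lim t' s' : positive_form t' -> positive_form s' -> form_closed ip t' ->
    form_sum_is t' s' w ->
    exists2 a, fdom t' a & vanishing (fun n => tsqnorm t' (z n - a)).
  move=> Pt' Ps' ct' tsw'; apply: ((form_closedE Pt').1 ct' z) => [n|].
    by have := wz n; rewrite (form_sum_dom tsw') => -[].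
  apply: (vanishing2_le (K := 1 + form_m ip t')) Cz; first by have := form_m_ge0 Pt'; lra.
  by move=> n m; apply: (tsqnorm_summand_le Pt' Ps' Pw tsw'); apply: subspaceB.
have [xt txt zt] := summand_lim t s Pt Ps ct tsw.
have [xs sxs zs] := summand_lim s t Ps Pt cs (form_sumC tsw).
have xts : xt = xs.
  apply: (@sqnorm_limit_unique _ _ z).
  - by apply: (vanishing_le (K := 1)) zt => // n; rewrite mul1r sqnorm_le_tsqnorm.
  - by apply: (vanishing_le (K := 1)) zs => // n; rewrite mul1r sqnorm_le_tsqnorm.
subst xs; have wxt : fdom w xt by rewrite domw.
exists xt => //; apply: (vanishing_le (K := 1 + form_m ip w)) (vanishingD zt zs).
  by have := form_m_ge0 Pw; lra.
by move=> n; apply: (tsqnorm_sum_le Pt Ps Pw tsw); apply: subspaceB.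
Qed.

Lemma quad_le_sqnorm t : Vf ip t -> form_bounded ip t ->
  exists2 K, 0 <= K & forall v, quad t v <= K * sqnorm v.
Proof.
move=> Vt bt; have [M tM] := bt; have Pt := Vf_positive Vt.
have domt := Vf_bounded_dom Vt bt; have St := Vf_bounded_sesq Vt bt.
exists `|M|; first exact: normr_ge0.
move=> v; have [->|v0] := eqVneq v 0.
  by rewrite /quad /sqnorm (sesq0l St) // (sesq0l ip_sesq) // mulr0.
have n0 : 0 < sqnorm v.
  by rewrite lt_def sqnorm_ge0 andbT; apply/eqP => /sqnorm_eq0; apply/eqP.
set c := (Num.sqrt (sqnorm v))^-1.
have cc : c * c * sqnorm v = 1.
  by rewrite -expr2 exprVn sqr_sqrtr ?ltW // mulVf // gt_eqF.
have unit1 : hnorm ip (c%:C *: v) = 1.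
  by rewrite /hnorm (sesq_diagZ ip_sesq) // -mulrA !Re_realM mulrA cc sqrtr1.
have /ler_Re := tM _ (eq_ind_r (@^~ _) I domt) unit1.
rewrite (sesq_diagZ St) // -mulrA !Re_realM mulrA -/(quad t v) => cqM.
have -> : quad t v = sqnorm v * (c * c * quad t v).
  by rewrite mulrA [sqnorm v * _]mulrC cc mul1r.
rewrite [X in _ <= X]mulrC; apply: ler_wpM2l; first exact: sqnorm_ge0.
exact: le_trans cqM (ler_norm _).
Qed.

Lemma quad_le_of_dense y u (D : set V) : Vf ip y -> form_bounded ip y ->
  Vf ip u -> form_bounded ip u -> dense ip D ->
  (forall p, D p -> quad y p = quad u p) -> forall a, quad y a <= quad u a.
Proof.
move=> Vy bdy Vu bdu denseD yu a.
have [Ky Ky0 yK] := quad_le_sqnorm Vy bdy; have [Ku Ku0 uK] := quad_le_sqnorm Vu bdu.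
have Sy := Vf_bounded_sesq Vy bdy; have Su := Vf_bounded_sesq Vu bdu.
apply: ler_of_forall_scale => [|k k0]; first exact: quad_ge0 (Vf_positive Vu) a.
have A0 : 0 <= 1 + k by lra.
have B0 : 0 <= 1 + k^-1 by have := invr_gt0 k; rewrite k0; lra.
apply: (@ler_of_approx _ _ _ ((1 + k) * (1 + k^-1) * Ku + (1 + k^-1) * Ky)).
  by rewrite addr_ge0 ?mulr_ge0.
move=> d d0; have [p Dp ap] := denseD a _ (ltac:(by rewrite sqrtr_gt0) : 0 < Num.sqrt d).
exists (sqnorm (a - p)); split; first exact: sqnorm_ge0.
  by move: ap; rewrite ltr_sqrt.
have yap : quad y a <= (1 + k) * quad y p + (1 + k^-1) * (Ky * sqnorm (a - p)).
  have := sesq_diagD_le p (a - p) Sy (fval_diag_ge0 (Vf_positive Vy)) k0.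
  rewrite subrKC => /le_trans; apply; rewrite lerD2l; apply: ler_wpM2l => //.
  exact: yK.
have upa : quad u p <= (1 + k) * quad u a + (1 + k^-1) * (Ku * sqnorm (a - p)).
  have := sesq_diagD_le a (p - a) Su (fval_diag_ge0 (Vf_positive Vu)) k0.
  rewrite subrKC => /le_trans; apply; rewrite lerD2l sqnormB; apply: ler_wpM2l => //.
  exact: uK.
rewrite (yu p Dp) in yap; apply: le_trans yap _.
have -> : (1 + k) ^+ 2 * quad u a +
    ((1 + k) * (1 + k^-1) * Ku + (1 + k^-1) * Ky) * sqnorm (a - p) =
  (1 + k) * ((1 + k) * quad u a + (1 + k^-1) * (Ku * sqnorm (a - p))) +
    (1 + k^-1) * (Ky * sqnorm (a - p)) by ring.
by rewrite lerD2r; apply: ler_wpM2l.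
Qed.

Lemma bounded_eq_of_dense y u (D : set V) : Vf ip y -> form_bounded ip y ->
  Vf ip u -> form_bounded ip u -> dense ip D ->
  (forall p, D p -> quad y p = quad u p) -> y = u.
Proof.
move=> Vy bdy Vu bdu denseD yu.
have yleu := quad_le_of_dense Vy bdy Vu bdu denseD yu.
have ulev := quad_le_of_dense Vu bdu Vy bdy denseD (fun p Dp => esym (yu p Dp)).
have [[Fy _] [Fu _]] := (Vf_positive Vy, Vf_positive Vu).
apply: form_ext => //; first by rewrite (Vf_bounded_dom Vy bdy) (Vf_bounded_dom Vu bdu).
move=> a b _ _.
apply: (sesq_eq_of_diag (Vf_bounded_sesq Vy bdy) (Vf_bounded_sesq Vu bdu)) => c.
rewrite (fval_diag (Vf_positive Vy)) (fval_diag (Vf_positive Vu)).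
by congr (_%:C); apply/eqP; rewrite eq_le yleu ulev.
Qed.

Lemma zero_form_is_form : is_form ip (@zero_form R V).
Proof.
split => //.
- move=> a e e0; exists a => //.
  by rewrite subrr /hnorm (sesq0l ip_sesq) // sqrtr0.
- by move=> *; rewrite /= mulr0 addr0.
- by move=> *; rewrite /= mulr0 addr0.
Qed.

Lemma form_m_zero : form_m ip (@zero_form R V) = 0.
Proof.
rewrite /form_m; set S := [set _ | _ in _].
have [[a [_ a1]]|nS] := pselect (exists a, fdom (@zero_form R V) a /\ hnorm ip a = 1).
  suff -> : S = [set 0] by rewrite inf1.
  by apply/seteqP; split => r; [case=> v _ <- | move=> ->; exists a].
suff -> : S = set0 by rewrite inf0.
by apply/seteqP; split => r // [b b1 _]; apply: nS; exists b.
Qed.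

Lemma Cf_zero : hcomplete ip -> Cf ip (@zero_form R V).
Proof.
move=> complete; split; first by split; [exact: zero_form_is_form | move=> v _ /= |].
have tnorm0 v : tnorm ip (@zero_form R V) v = hnorm ip v.
  by rewrite /tnorm form_m_zero /= add0r addr0 mul1r.
move=> z _ Cz; have [a za] : exists a, hconverges_to ip z a.
  apply: complete => e e0; have [N hN] := Cz e e0.
  by exists N => n m Nn Nm; rewrite -tnorm0 hN.
exists a => // e e0; have [N hN] := za e e0.
by exists N => n Nn; rewrite tnorm0 hN.
Qed.

Lemma form_eq0_of_diag x : is_form ip x -> fdom x = setT ->
  (forall a, fval x a a = 0) -> x = (@zero_form R V).
Proof.
move=> Fx domx x0; apply: form_ext => //; first exact: zero_form_is_form.
move=> a b _ _; have Sx : sesq setT (fval x) by rewrite -domx; apply: form_sesq.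
exact: (sesq_eq_of_diag Sx (form_sesq zero_form_is_form)).
Qed.

Lemma compatible_assoc x y u xy yu : Vf ip x -> Vf ip y -> Vf ip u -> Vf ip xy ->
  form_sum_is x y xy -> form_sum_is y u yu -> compatible x y -> compatible xy u ->
  compatible y u /\ compatible x yu.
Proof.
move=> Vx Vy Vu Vxy sxy syu cxy cxyu.
have Px := Vf_positive Vx; have Py := Vf_positive Vy; have Pu := Vf_positive Vu.
have domyu := form_sum_dom syu; have domxy := form_sum_dom sxy.
case: cxyu => [bxy|[bdu|dxyu]].
- have /setI_eqT[domx domy] : fdom x `&` fdom y = setT.
    by rewrite -domxy (Vf_bounded_dom Vxy bxy).
  have bx : form_bounded ip x.
    by apply: (form_bounded_summand Py sxy) => //; rewrite domxy domx domy setIT.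
  have bdy : form_bounded ip y.
    by apply: (form_bounded_summand Px (form_sumC sxy)) => //; rewrite domxy domx domy.
  by split; left.
- have domu := Vf_bounded_dom Vu bdu; split; first by right; left.
  case: cxy => [bx|[bdy|dxy]]; first by left.
  + by right; left; apply: (form_sum_bounded Py Pu syu).
  + by right; right; rewrite domyu domu setIT.
- rewrite domxy in dxyu; case: cxy => [bx|[bdy|dxy]].
  + rewrite (Vf_bounded_dom Vx bx) setTI in dxyu.
    by split; [right; right | left].
  + rewrite (Vf_bounded_dom Vy bdy) setIT in dxyu.
    by split; [left | right; right; rewrite domyu (Vf_bounded_dom Vy bdy) setTI].
  + rewrite -dxy setIid in dxyu.
    by split; right; right; rewrite ?domyu -dxy // -dxyu setIid.
Qed.

Local Notation oplusCf := (restrict_op (Cf ip) (@oplus_is R V ip)).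

Lemma oplusCfC x y w : oplusCf x y w -> oplusCf y x w.
Proof.
case=> -[cxy sxy] Cw; split => //; split; last exact: form_sumC.
by case: cxy => [|[|]]; [right; left | left | right; right].
Qed.

Lemma oplusCfA x y u : Cf ip x -> Cf ip y -> Cf ip u ->
  forall xy xyu, oplusCf x y xy -> oplusCf xy u xyu ->
  exists2 yu, oplusCf y u yu & oplusCf x yu xyu.
Proof.
move=> Cx Cy Cu xy xyu [[cxy sxy] Cxy] [[cxyu sxyu] Cxyu].
have syu := form_addP y u.
have [cyu cxyu'] := compatible_assoc Cx.1 Cy.1 Cu.1 Cxy.1 sxy syu cxy cxyu.
have Cyu : Cf ip (form_add y u).
  by split; [apply: (form_sum_Vf Cy.1 Cu.1) | apply: (form_sum_closed Cy Cu)].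
by exists (form_add y u) => //; split => //; split => //; apply: form_sumA sxyu syu.
Qed.

Lemma oplusCf0 x : Cf ip x -> oplusCf x (@zero_form R V) x.
Proof.
move=> Cx; split => //; split; first by right; left; exists 0.
split; first by rewrite /fdom /= setIT.
move=> a b; have [xab|xab] := pselect (fdom x a /\ fdom x b).
  by rewrite asboolT //= addr0.
by rewrite asboolF // fval_outside //; case: Cx => -[].
Qed.

Lemma form_sum_agree x y u w a b : form_sum_is x y w -> form_sum_is x u w ->
  fdom w a -> fdom w b -> fval y a b = fval u a b.
Proof.
move=> sxy sxu wa wb; apply: (@addrI _ (fval x a b)).
by rewrite -(form_sum_val sxy) // -(form_sum_val sxu).
Qed.

(* once y is bounded, x + y = x + u forces u to inherit the bound of y *)
Lemma cancel_bounded_dom x y u w : Vf ip y -> Vf ip u -> form_sum_is x y w ->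
  form_sum_is x u w -> form_bounded ip y -> fdom x = fdom u -> fdom x = setT.
Proof.
move=> Vy Vu sxy sxu [M yM] dxu; have domy := Vf_bounded_dom Vy (ex_intro _ M yM).
have wx : fdom w = fdom x by rewrite (form_sum_dom sxy) domy setIT.
have wu : fdom w = fdom u by rewrite (form_sum_dom sxu) -dxu setIid.
rewrite -wx wu; apply: (Vf_bounded_dom Vu); exists M => v uv v1.
have wv : fdom w v by rewrite wu.
by rewrite -(form_sum_agree sxy sxu wv wv); apply: yM; rewrite ?domy.
Qed.

Lemma form_sum_cancel x y u w : Vf ip x -> Vf ip y -> Vf ip u ->
  form_sum_is x y w -> form_sum_is x u w -> compatible x y -> compatible x u -> y = u.
Proof.
move=> Vx Vy Vu sxy sxu cxy cxu.
have [Fy _] := Vf_positive Vy; have [Fu _] := Vf_positive Vu.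
have same_dom : fdom w = fdom y -> fdom w = fdom u -> y = u.
  move=> wy wu; apply: form_ext => //; first by rewrite -wy -wu.
  by move=> a b ya yb; apply: (form_sum_agree sxy sxu); rewrite wy.
have [domx|[[dxy dxu]|[bdy bdu]]] : fdom x = setT \/
    (fdom x = fdom y /\ fdom x = fdom u) \/ (form_bounded ip y /\ form_bounded ip u).
  case: cxy => [bx|[bdy|dxy]]; first by left; apply: (Vf_bounded_dom Vx).
  - case: cxu => [bx|[bdu|dxu]]; first by left; apply: (Vf_bounded_dom Vx).
    + by right; right.
    + by left; apply: (cancel_bounded_dom Vy Vu sxy sxu).
  - case: cxu => [bx|[bdu|dxu]]; first by left; apply: (Vf_bounded_dom Vx).
    + by left; apply: (cancel_bounded_dom Vu Vy sxu sxy); rewrite // -dxy.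
    + by right; left.
- apply: same_dom; first by rewrite (form_sum_dom sxy) domx setTI.
  by rewrite (form_sum_dom sxu) domx setTI.
- apply: same_dom; first by rewrite (form_sum_dom sxy) -dxy setIid.
  by rewrite (form_sum_dom sxu) -dxu setIid.
- have domy := Vf_bounded_dom Vy bdy.
  have [[_ denx _ _ _] _ _] := Vx.
  apply: (bounded_eq_of_dense Vy bdy Vu bdu denx) => p xp.
  have wp : fdom w p by rewrite (form_sum_dom sxy) domy setIT.
  by rewrite /quad (form_sum_agree sxy sxu wp wp).
Qed.

Lemma oplusCf_eq0 x y : Cf ip x -> Cf ip y -> oplusCf x y (@zero_form R V) ->
  x = (@zero_form R V) /\ y = (@zero_form R V).
Proof.
move=> [Vx _] [Vy _] [[_ sxy] _].
have /esym/setI_eqT[domx domy] := form_sum_dom sxy.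
have Px := Vf_positive Vx; have Py := Vf_positive Vy.
have diag0 a : fval x a a = 0 /\ fval y a a = 0.
  have := paddr_eq0 (fval_diag_ge0 Px a) (fval_diag_ge0 Py a).
  rewrite -(form_sum_val sxy (I : setT a) (I : setT a)) /= eqxx.
  by move=> /esym/andP[/eqP -> /eqP ->].
have [[Fx _] [Fy _]] := (Px, Py).
by split; apply: form_eq0_of_diag => // a; case: (diag0 a).
Qed.

End Forms.

Theorem theorem4p15 (R : realType) (V : lmodType R[i]) (ip : V -> V -> R[i])
  (Hip : is_inner_product ip) (Hcomplete : hcomplete ip)
  (Hinf : infinite_dimensional (V := V)) :
  generalized_effect_algebra (Cf ip)
    (restrict_op (Cf ip) (@oplus_is R V ip)) (zero_form (V := V)).
Proof.
split; first exact: Cf_zero.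
split; first split.
- by move=> x y w w' _ _ [[_ sxy] _] [[_ sxy'] _]; apply: form_sum_uniq sxy sxy'.
- by move=> x y w _ _ [].
- by move=> x y w _ _; apply: oplusCfC.
split.
- move=> x y u Cx Cy Cu; split; first exact: oplusCfA.
  move=> yu xyu /oplusCfC syu /oplusCfC sxyu.
  have [xy sxy syxu] := oplusCfA Hip Cu Cy Cx syu sxyu.
  by exists xy; apply: oplusCfC.
- by move=> x Cx; apply: oplusCf0.
- move=> x y u w Cx Cy Cu [[cxy sxy] _] [[cxu sxu] _].
  exact: (form_sum_cancel Hip Cx.1 Cy.1 Cu.1 sxy sxu cxy cxu).
- by move=> x y Cx Cy; apply: oplusCf_eq0.
Qed.
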